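(* (i) For any $r>0$, the function $X\mapsto n_r(X)$ is upper semicontinuous on compact metric spaces with respect to the Gromov–Hausdorff topology. (ii) For any $r>0$, $R>0$, the function $(X,x)\mapsto n_r(\overline{B}_X(x,R))$ is upper semicontinuous on pointed proper metric spaces with respect to the pointed Gromov–Hausdorff topology. (iii) For any $r>0$, the function $X\mapsto \overline{n}_r(X)$ is lower semicontinuous on compact metric spaces with respect to the Gromov–Hausdorff topology. (iv) For any $r>0$, $R>0$, the function $(X,x)\mapsto \overline{n}_r(\overline{B_X(x,R)})$ is lower semicontinuous on pointed proper metric spaces with respect to the pointed Gromov–Hausdorff topology.
   Context: For a metric space $X$ and $A\subseteq X$, $n_r(A)$ (resp. $\overline{n}_r(A)$) is the minimum number of open (resp. closed) balls of radius $r$ needed to cover $A$. $\overline{B}_X(x,R)=\{y:d(x,y)\le R\}$ and $\overline{B_X(x,R)}$ is the closure of the open ball $B_X(x,R)$. Gromov–Hausdorff topology on isometry classes of compact metric spaces, and pointed Gromov–Hausdorff topology on isometry classes of pointed proper metric spaces, are the standard ones. *)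

From Stdlib Require Import Reals Lra List ClassicalEpsilon.
Open Scope R_scope.

Record MetricSpace := {
  mcarrier :> Type;
  mdist : mcarrier -> mcarrier -> R;
  mdist_refl : forall x, mdist x x = 0;
  mdist_eq : forall x y, mdist x y = 0 -> x = y;
  mdist_sym : forall x y, mdist x y = mdist y x;
  mdist_tri : forall x y z, mdist x z <= mdist x y + mdist y z
}.
Arguments mdist {m}.

Section Defs.
Variable X : MetricSpace.

Definition is_open (U : X -> Prop) : Prop :=
  forall x, U x -> exists e, 0 < e /\ forall y, mdist x y < e -> U y.

Definition compact_set (A : X -> Prop) : Prop :=
  forall (I : Type) (U : I -> X -> Prop),
    (forall i, is_open (U i)) ->
    (forall a, A a -> exists i, U i a) ->
    exists l : list I, forall a, A a -> exists i, In i l /\ U i a.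

Definition full : X -> Prop := fun _ => True.

Definition cball (x : X) (R : R) : X -> Prop := fun y => mdist x y <= R.
Definition oball (x : X) (R : R) : X -> Prop := fun y => mdist x y < R.
Definition closure (A : X -> Prop) : X -> Prop :=
  fun y => forall e, 0 < e -> exists z, A z /\ mdist z y < e.

Definition covered_open (A : X -> Prop) (r : R) (l : list X) : Prop :=
  forall a, A a -> exists c, In c l /\ mdist c a < r.
Definition covered_closed (A : X -> Prop) (r : R) (l : list X) : Prop :=
  forall a, A a -> exists c, In c l /\ mdist c a <= r.

Definition is_min_cover (cov : list X -> Prop) (N : nat) : Prop :=
  (exists l, cov l /\ length l = N) /\ (forall l, cov l -> (N <= length l)%nat).

(** n_r(A) and \overline{n}_r(A): the (unique) minimum when it exists
    (always the case below, since the sets involved are compact). *)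
Definition n_open (A : X -> Prop) (r : R) : nat :=
  epsilon (inhabits 0%nat) (is_min_cover (covered_open A r)).
Definition n_closed (A : X -> Prop) (r : R) : nat :=
  epsilon (inhabits 0%nat) (is_min_cover (covered_closed A r)).
End Defs.

Arguments full {X}.

Definition compact_ms (X : MetricSpace) : Prop := compact_set X full.
Definition proper_ms (X : MetricSpace) : Prop :=
  forall (x : X) (R : R), compact_set X (cball X x R).

Definition eps_correspondence (X Y : MetricSpace) (C : X -> Y -> Prop) (eps : R)
  : Prop :=
  (forall x, exists y, C x y) /\ (forall y, exists x, C x y) /\
  (forall x x' y y', C x y -> C x' y' -> Rabs (mdist x x' - mdist y y') < eps).

(** Gromov-Hausdorff convergence X_k -> Y of compact metric spaces
    (d_GH(X_k,Y) -> 0, via correspondences). *)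
Definition GH_conv (X : nat -> MetricSpace) (Y : MetricSpace) : Prop :=
  forall eps, 0 < eps -> exists k0, forall k, (k0 <= k)%nat ->
    exists C : X k -> Y -> Prop, eps_correspondence (X k) Y C eps.

(** Pointed Gromov-Hausdorff convergence (X_k,p_k) -> (Y,q)
    (Burago-Burago-Ivanov, Def. 8.1.1). *)
Definition pGH_conv (X : nat -> MetricSpace) (p : forall k, X k)
    (Y : MetricSpace) (q : Y) : Prop :=
  forall rho eps, 0 < rho -> 0 < eps -> exists k0, forall k, (k0 <= k)%nat ->
    exists f : X k -> Y,
      f (p k) = q /\
      (forall x x', oball (X k) (p k) rho x -> oball (X k) (p k) rho x' ->
         Rabs (mdist (f x) (f x') - mdist x x') < eps) /\
      (forall y, oball Y q (rho - eps) y ->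
         exists x, oball (X k) (p k) rho x /\ mdist (f x) y < eps).
Arguments n_open : clear implicits.
Arguments n_closed : clear implicits.
Arguments cball : clear implicits.
Arguments oball : clear implicits.
Arguments closure : clear implicits.

(** Upper semicontinuity of [n_r]: by compactness, a cover by open [r]-balls
    has a margin [delta > 0], i.e. the same centres cover with radius
    [r - delta]; a cover of a closed ball of radius [R] even covers the
    concentric closed ball of radius [R + delta] this way.
    A (pointed) Gromov-Hausdorff approximation of precision [delta/2] then pulls
    the centres back to a cover by open [r]-balls of the approximating space.

    Lower semicontinuity of the closed covering number: if infinitely many
    approximating spaces admitted closed [r]-covers with fewer than [N] centres,
    pushing these centres forward would give, for every [m], at most [N - 1]
    points covering the limit up to radius [r + 1/m].  By compactness a
    subsequence of these tuples converges, and the limit tuple is a closed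
    [r]-cover with [N - 1] centres, contradicting the minimality of [N]. *)

From Stdlib Require Import Reals Lra Lia List ClassicalEpsilon Classical Arith.
Open Scope R_scope.

Lemma inv_succ_pos (m : nat) : 0 < / (INR m + 1).
Proof. apply Rinv_0_lt_compat. pose proof (pos_INR m). lra. Qed.

Lemma inv_succ_le_1 (m : nat) : / (INR m + 1) <= 1.
Proof. pose proof (pos_INR m). rewrite <- Rinv_1. apply Rinv_le_contravar; lra. Qed.

Lemma inv_succ_antitone (m0 m : nat) :
  (m0 <= m)%nat -> / (INR m + 1) <= / (INR m0 + 1).
Proof.
  intros H. apply le_INR in H. pose proof (pos_INR m0).
  apply Rinv_le_contravar; lra.
Qed.

Lemma exists_inv_succ_lt (t : R) : 0 < t -> exists m : nat, / (INR m + 1) < t.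
Proof.
  intros Ht. destruct (archimed_cor1 t Ht) as [N [HN HN0]].
  exists N. eapply Rle_lt_trans; [|exact HN].
  apply Rinv_le_contravar; [apply lt_0_INR; lia | lra].
Qed.

Lemma finite_uniform_gap (g : nat -> R) (r : R) (M : nat) :
  (forall j, (j < M)%nat -> r < g j) ->
  exists eta, 0 < eta /\ forall j, (j < M)%nat -> r + eta < g j.
Proof.
  induction M as [|M IH]; intros H.
  - exists 1. split; [lra | intros; lia].
  - destruct IH as [eta [Heta Hgap]]. { intros j Hj. apply H. lia. }
    assert (HM : r < g M) by (apply H; lia).
    exists (Rmin eta ((g M - r) / 2)). split; [apply Rmin_pos; lra|].
    intros j Hj. pose proof (Rmin_l eta ((g M - r) / 2)).
    pose proof (Rmin_r eta ((g M - r) / 2)).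
    destruct (Nat.eq_dec j M) as [->|Hne]; [lra|].
    specialize (Hgap j ltac:(lia)). lra.
Qed.

Lemma list_max_ge (l : list nat) (n : nat) : In n l -> (n <= list_max l)%nat.
Proof.
  intros Hn. pose proof (proj1 (list_max_le l _) (le_n _)) as H.
  rewrite Forall_forall in H. auto.
Qed.

Lemma list_choice {A B : Type} (P : A -> B -> Prop) (l : list A) :
  (forall a, In a l -> exists b, P a b) ->
  exists l', length l' = length l /\ forall a, In a l -> exists b, In b l' /\ P a b.
Proof.
  induction l as [|a l IH]; intros H.
  - exists nil. split; [reflexivity | intros a []].
  - destruct (H a (or_introl eq_refl)) as [b Hb].
    destruct IH as [l' [Hlen Hl']]. { intros a' Ha'. apply H. right. exact Ha'. }
    exists (b :: l'). split; [simpl; congruence|].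
    intros a' [<-|Ha']; [exists b; split; [left; reflexivity | exact Hb]|].
    destruct (Hl' a' Ha') as [b' [Hb' HP]]. exists b'. split; [right|]; assumption.
Qed.

Lemma not_eventually (P : nat -> Prop) :
  ~ (exists k0, forall k, (k0 <= k)%nat -> P k) ->
  forall k0, exists k, (k0 <= k)%nat /\ ~ P k.
Proof.
  intros H k0. apply NNPP. intros Hno. apply H. exists k0. intros k Hk.
  apply NNPP. intros HPk. apply Hno. eauto.
Qed.

Section Metric.
Variable X : MetricSpace.

Lemma mdist_nonneg (x y : X) : 0 <= mdist x y.
Proof.
  pose proof (mdist_tri X x y x) as H.
  rewrite mdist_refl, (mdist_sym X y x) in H. lra.
Qed.

Lemma is_open_oball (c : X) (s : R) : is_open X (oball X c s).
Proof.
  intros x Hx. unfold oball in *. exists (s - mdist c x). split; [lra|].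
  intros y Hy. pose proof (mdist_tri X c x y). lra.
Qed.

Lemma is_open_and_prop (Q : Prop) (U : X -> Prop) :
  is_open X U -> is_open X (fun z => Q /\ U z).
Proof.
  intros HU x [HQ Hx]. destruct (HU x Hx) as [e [He Hball]].
  exists e. split; [exact He|]. intros y Hy. split; [exact HQ | auto].
Qed.

Lemma is_open_const (Q : Prop) : is_open X (fun _ => Q).
Proof. intros x HQ. exists 1. split; [lra | auto]. Qed.

Lemma is_open_dist_gt (q : X) (t : R) : is_open X (fun z => t < mdist q z).
Proof.
  intros x Hx. exists (mdist q x - t). split; [lra|].
  intros y Hy. pose proof (mdist_tri X q y x).
  rewrite (mdist_sym X y x) in H. lra.
Qed.

Lemma closure_incl (A : X -> Prop) (y : X) : A y -> closure X A y.
Proof. intros Hy e He. exists y. rewrite mdist_refl. auto. Qed.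

Lemma closure_oball_cball (z : X) (Rad : R) (y : X) :
  closure X (oball X z Rad) y -> cball X z Rad y.
Proof.
  intros H. apply Rnot_lt_le. intros Hlt.
  destruct (H (mdist z y - Rad)) as [w [Hw Hd]]; [lra|].
  unfold oball in Hw. pose proof (mdist_tri X z w y). lra.
Qed.

Lemma covered_closed_of_open (A : X -> Prop) (r : R) (l : list X) :
  covered_open X A r l -> covered_closed X A r l.
Proof.
  intros Hl a Ha. destruct (Hl a Ha) as [c [Hc Hd]].
  exists c. split; [exact Hc | lra].
Qed.

Lemma covered_open_of_closed (A : X -> Prop) (s r : R) (l : list X) :
  s < r -> covered_closed X A s l -> covered_open X A r l.
Proof.
  intros Hsr Hl a Ha. destruct (Hl a Ha) as [c [Hc Hd]].
  exists c. split; [exact Hc | lra].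
Qed.

Lemma covered_open_of_compact (K A : X -> Prop) (r : R) :
  0 < r -> compact_set X K -> (forall a, A a -> K a) ->
  exists l, covered_open X A r l.
Proof.
  intros Hr HK HAK. destruct (HK X (fun c => oball X c r)) as [l Hl].
  - intros c. apply is_open_oball.
  - intros a _. exists a. unfold oball. rewrite mdist_refl. exact Hr.
  - exists l. intros a Ha. exact (Hl a (HAK a Ha)).
Qed.

Lemma covered_closed_of_compact (K A : X -> Prop) (r : R) :
  0 < r -> compact_set X K -> (forall a, A a -> K a) ->
  exists l, covered_closed X A r l.
Proof.
  intros Hr HK HAK. destruct (covered_open_of_compact K A r Hr HK HAK) as [l Hl].
  exists l. exact (covered_closed_of_open A r l Hl).
Qed.

Lemma covered_closed_near_centres (A : X -> Prop) (z : X) (Rad r : R)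
    (l : list X) :
  (forall a, A a -> cball X z Rad a) -> covered_closed X A r l ->
  exists l', (length l' <= length l)%nat /\ covered_closed X A r l' /\
    forall c, In c l' -> cball X z (Rad + r) c.
Proof.
  intros HA Hl.
  exists (filter (fun c => if Rle_dec (mdist z c) (Rad + r) then true else false) l).
  split; [apply filter_length_le | split].
  - intros a Ha. destruct (Hl a Ha) as [c [Hc Hd]].
    exists c. split; [|exact Hd]. apply filter_In. split; [exact Hc|].
    destruct Rle_dec as [|Hfar]; [reflexivity|]. exfalso. apply Hfar.
    specialize (HA a Ha). unfold cball in HA.
    pose proof (mdist_tri X z a c). rewrite (mdist_sym X a c) in H. lra.
  - intros c Hc. apply filter_In in Hc as [_ Hc].
    destruct Rle_dec; [assumption | discriminate].
Qed.

Lemma min_cover_epsilon (cov : list X -> Prop) :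
  (exists l, cov l) ->
  is_min_cover X cov (epsilon (inhabits 0%nat) (is_min_cover X cov)).
Proof.
  intros [l Hl]. apply epsilon_spec.
  set (P := fun n => exists l, cov l /\ length l = n).
  destruct (dec_inh_nat_subset_has_unique_least_element P (fun n => classic (P n)))
    as [N [[HN Hmin] _]].
  { exists (length l), l. auto. }
  exists N. split; [exact HN|]. intros l' Hl'. apply Hmin. exists l'. auto.
Qed.

Lemma n_open_attained (A : X -> Prop) (r : R) :
  (exists l, covered_open X A r l) ->
  exists l, covered_open X A r l /\ length l = n_open X A r.
Proof. intros H. exact (proj1 (min_cover_epsilon _ H)). Qed.

Lemma n_closed_attained (A : X -> Prop) (r : R) :
  (exists l, covered_closed X A r l) ->
  exists l, covered_closed X A r l /\ length l = n_closed X A r.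
Proof. intros H. exact (proj1 (min_cover_epsilon _ H)). Qed.

Lemma n_open_le_length (A : X -> Prop) (r : R) (l : list X) :
  covered_open X A r l -> (n_open X A r <= length l)%nat.
Proof. intros Hl. exact (proj2 (min_cover_epsilon _ (ex_intro _ l Hl)) l Hl). Qed.

Lemma n_closed_le_length (A : X -> Prop) (r : R) (l : list X) :
  covered_closed X A r l -> (n_closed X A r <= length l)%nat.
Proof. intros Hl. exact (proj2 (min_cover_epsilon _ (ex_intro _ l Hl)) l Hl). Qed.

(** Lebesgue-number argument; with [g := fun _ => 0] it says that a cover
    of the compact set [K] itself has a margin. *)
Lemma compact_cover_margin (K : X -> Prop) (g : X -> R) (t r : R) (l : list X) :
  compact_set X K -> (forall s, is_open X (fun y => s < g y)) ->
  covered_open X (fun y => K y /\ g y <= t) r l ->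
  exists delta, 0 < delta /\
    covered_open X (fun y => K y /\ g y <= t + delta) (r - delta) l.
Proof.
  intros HK Hg Hl.
  pose (U := fun i : (X * nat) + nat => match i with
    | inl (c, m) => fun y => In c l /\ oball X c (r - / (INR m + 1)) y
    | inr m => fun y => t + / (INR m + 1) < g y end).
  pose (idx := fun i : (X * nat) + nat => match i with inl (_, m) => m | inr m => m end).
  destruct (HK _ U) as [L HL].
  - intros [[c m]|m]; [apply is_open_and_prop, is_open_oball | apply Hg].
  - intros y Hy. destruct (Rle_dec (g y) t) as [Hle|Hgt].
    + destruct (Hl y (conj Hy Hle)) as [c [Hc Hd]].
      destruct (exists_inv_succ_lt (r - mdist c y)) as [m Hm]; [lra|].
      exists (inl (c, m)). split; [exact Hc | unfold oball; lra].
    + destruct (exists_inv_succ_lt (g y - t)) as [m Hm]; [lra|].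
      exists (inr m). simpl. lra.
  - exists (/ (INR (list_max (map idx L)) + 1)). split; [apply inv_succ_pos|].
    intros y [Hy Hgy]. destruct (HL y Hy) as [i [Hi HUi]].
    pose proof (inv_succ_antitone _ _ (list_max_ge _ _ (in_map idx L i Hi))) as Hmax.
    destruct i as [[c m]|m]; simpl in HUi, Hmax.
    + destruct HUi as [Hc Hd]. unfold oball in Hd. exists c. split; [exact Hc | lra].
    + lra.
Qed.

Lemma compact_cluster_point (K : X -> Prop) (a : nat -> X) :
  compact_set X K -> (forall n, K (a n)) ->
  exists y, forall e, 0 < e -> forall N, exists n, (N <= n)%nat /\ mdist (a n) y < e.
Proof.
  intros HK Ha. apply NNPP. intros Hno.
  assert (Hfar : forall y, exists e N,
             0 < e /\ forall n, (N <= n)%nat -> e <= mdist (a n) y).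
  { intros y. apply NNPP. intros H1. apply Hno. exists y. intros e He N.
    apply NNPP. intros H2. apply H1. exists e, N. split; [exact He|].
    intros n Hn. apply Rnot_lt_le. intros H3. apply H2. eauto. }
  pose (U := fun i : X * R * nat => let '(y, e, N) := i in fun z =>
     (0 < e /\ forall n, (N <= n)%nat -> e <= mdist (a n) y) /\ oball X y e z).
  destruct (HK _ U) as [L HL].
  - intros [[y e] N]. apply is_open_and_prop, is_open_oball.
  - intros z _. destruct (Hfar z) as [e [N [He HN]]]. exists (z, e, N).
    split; [auto | unfold oball; rewrite mdist_refl; exact He].
  - set (n := list_max (map snd L)).
    destruct (HL (a n) (Ha n)) as [[[y e] N] [Hi [[He HN] Hd]]].
    pose proof (list_max_ge _ _ (in_map snd L _ Hi)) as HNn.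
    specialize (HN n HNn). unfold oball in Hd. rewrite mdist_sym in HN. lra.
Qed.

(** The index map [phi] only satisfies [n <= phi n]; it need not be monotone,
    which is all that the extraction of convergent tuples below requires. *)
Lemma compact_convergent_subseq (K : X -> Prop) (a : nat -> X) :
  compact_set X K -> (forall n, K (a n)) ->
  exists (y : X) (phi : nat -> nat), (forall n, (n <= phi n)%nat) /\
    forall e, 0 < e -> exists N, forall n, (N <= n)%nat -> mdist (a (phi n)) y < e.
Proof.
  intros HK Ha. destruct (compact_cluster_point K a HK Ha) as [y Hy].
  destruct (choice (fun n m => (n <= m)%nat /\ mdist (a m) y < / (INR n + 1)))
    as [phi Hphi].
  { intros n. apply Hy, inv_succ_pos. }
  exists y, phi. split; [apply Hphi|].
  intros e He. destruct (exists_inv_succ_lt e He) as [N HN]. exists N.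
  intros n Hn. pose proof (proj2 (Hphi n)). pose proof (inv_succ_antitone N n Hn). lra.
Qed.

Lemma compact_convergent_subseq_tuple (K : X -> Prop) (c : nat -> nat -> X) (M : nat) :
  compact_set X K -> (forall m j, K (c m j)) ->
  exists (y : nat -> X) (phi : nat -> nat), (forall n, (n <= phi n)%nat) /\
    forall e, 0 < e -> exists N, forall n, (N <= n)%nat ->
      forall j, (j < M)%nat -> mdist (c (phi n) j) (y j) < e.
Proof.
  intros HK Hc. induction M as [|M IH].
  - exists (c O), (fun n => n). split; [auto|]. intros e He. exists O. intros; lia.
  - destruct IH as [y [phi [Hphi Hy]]].
    destruct (compact_convergent_subseq K (fun n => c (phi n) M) HK (fun n => Hc _ M))
      as [yM [psi [Hpsi HyM]]].
    exists (fun j => if Nat.eqb j M then yM else y j), (fun n => phi (psi n)).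
    split; [intros n; specialize (Hphi (psi n)); specialize (Hpsi n); lia|].
    intros e He. destruct (Hy e He) as [N1 H1]. destruct (HyM e He) as [N2 H2].
    exists (Nat.max N1 N2). intros n Hn j Hj.
    destruct (Nat.eqb_spec j M) as [->|Hne].
    + apply H2. lia.
    + apply H1; [specialize (Hpsi n); lia | lia].
Qed.

Definition approx_covered_closed (A : X -> Prop) (r : R) (cs : nat -> list X) : Prop :=
  forall a, A a -> forall eta, 0 < eta -> exists m0, forall m, (m0 <= m)%nat ->
    exists c, In c (cs m) /\ mdist c a <= r + eta.

Lemma covered_closed_of_approx (K A : X -> Prop) (r : R) (cs : nat -> list X)
    (M : nat) :
  compact_set X K -> (forall m c, In c (cs m) -> K c) ->
  (forall m, (length (cs m) <= M)%nat) -> approx_covered_closed A r cs ->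
  exists l, (length l <= M)%nat /\ covered_closed X A r l.
Proof.
  intros HK HcsK Hlen Happrox.
  destruct (classic (exists x0, K x0)) as [[x0 Hx0]|HK0].
  2:{ exists nil. split; [simpl; lia|]. intros a Ha.
      destruct (Happrox a Ha 1 Rlt_0_1) as [m0 Hm0].
      destruct (Hm0 m0 (le_n _)) as [c [Hc _]]. exfalso. eauto. }
  pose (c := fun m j => nth j (cs m) x0).
  destruct (compact_convergent_subseq_tuple K c M HK) as [y [phi [Hphi Hy]]].
  { intros m j. unfold c. destruct (nth_in_or_default j (cs m) x0) as [Hin | ->];
      [exact (HcsK m _ Hin) | exact Hx0]. }
  exists (map y (seq 0 M)). split; [rewrite length_map, length_seq; lia|].
  intros a Ha.
  destruct (classic (exists j, (j < M)%nat /\ mdist (y j) a <= r)) as [[j [Hj Hd]]|Hno].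
  { exists (y j). split; [apply in_map, in_seq; lia | exact Hd]. }
  exfalso.
  destruct (finite_uniform_gap (fun j => mdist (y j) a) r M) as [eta [Heta Hgap]].
  { intros j Hj. apply Rnot_le_lt. intros Hd. apply Hno. eauto. }
  destruct (Happrox a Ha (eta / 2)) as [m0 Hm0]; [lra|].
  destruct (Hy (eta / 2)) as [N HN]; [lra|].
  set (n := Nat.max m0 N).
  destruct (Hm0 (phi n)) as [c0 [Hc0 Hd0]]; [specialize (Hphi n); lia|].
  destruct (In_nth (cs (phi n)) c0 x0 Hc0) as [j [Hj Hnth]].
  assert (HjM : (j < M)%nat) by (specialize (Hlen (phi n)); lia).
  specialize (HN n ltac:(lia) j HjM). unfold c in HN. rewrite Hnth in HN.
  specialize (Hgap j HjM). simpl in Hgap.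
  pose proof (mdist_tri X (y j) c0 a). rewrite (mdist_sym X c0 (y j)) in HN. lra.
Qed.

Lemma approx_covered_closed_of_shrinking (A : X -> Prop) (r : R) (cs : nat -> list X) :
  (forall m, covered_closed X A (r + / (INR m + 1)) (cs m)) ->
  approx_covered_closed A r cs.
Proof.
  intros Hcs a Ha eta Heta. destruct (exists_inv_succ_lt eta Heta) as [m0 Hm0].
  exists m0. intros m Hm. destruct (Hcs m a Ha) as [c [Hc Hd]].
  exists c. split; [exact Hc|]. pose proof (inv_succ_antitone m0 m Hm). lra.
Qed.

Lemma approx_covered_closure_oball (q : X) (Rad r : R) (cs : nat -> list X) :
  (forall m, covered_closed X (fun y => mdist q y + 2 * / (INR m + 1) < Rad)
                              (r + 2 * / (INR m + 1)) (cs m)) ->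
  approx_covered_closed (closure X (oball X q Rad)) r cs.
Proof.
  intros Hcs y Hy eta Heta.
  destruct (Hy (eta / 2)) as [y' [Hy' Hyy']]; [lra|]. unfold oball in Hy'.
  set (t := Rmin (eta / 4) ((Rad - mdist q y') / 4)).
  assert (Ht : 0 < t /\ t <= eta / 4 /\ t <= (Rad - mdist q y') / 4).
  { split; [apply Rmin_pos; lra | split; [apply Rmin_l | apply Rmin_r]]. }
  destruct (exists_inv_succ_lt t (proj1 Ht)) as [m0 Hm0].
  exists m0. intros m Hm. pose proof (inv_succ_antitone m0 m Hm).
  destruct (Hcs m y') as [c [Hc Hcy']]; [lra|].
  exists c. split; [exact Hc|]. pose proof (mdist_tri X c y' y). lra.
Qed.

End Metric.

Lemma eps_correspondence_flip (X Y : MetricSpace) (C : X -> Y -> Prop) (eps : R) :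
  eps_correspondence X Y C eps -> eps_correspondence Y X (fun y x => C x y) eps.
Proof.
  intros [HX [HY Hdist]]. split; [exact HY | split; [exact HX|]].
  intros y y' x x' Hxy Hxy'. rewrite Rabs_minus_sym. apply Hdist; assumption.
Qed.

Lemma covered_closed_correspondence (X Y : MetricSpace) (C : X -> Y -> Prop)
    (eps s : R) (l : list X) :
  eps_correspondence X Y C eps -> covered_closed X full s l ->
  exists l', length l' = length l /\ covered_closed Y full (s + eps) l'.
Proof.
  intros [HX [HY Hdist]] Hl.
  destruct (list_choice C l) as [l' [Hlen Hl']]. { intros x _. apply HX. }
  exists l'. split; [exact Hlen|]. intros y _.
  destruct (HY y) as [x Hxy]. destruct (Hl x I) as [c [Hc Hcx]].
  destruct (Hl' c Hc) as [c' [Hc' Hcc']].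
  exists c'. split; [exact Hc'|].
  pose proof (Rabs_def2 _ _ (Hdist c x c' y Hcc' Hxy)). lra.
Qed.

Definition pGH_approx (X Y : MetricSpace) (p : X) (q : Y) (rho eps : R)
    (f : X -> Y) : Prop :=
  f p = q /\
  (forall x x', oball X p rho x -> oball X p rho x' ->
     Rabs (mdist (f x) (f x') - mdist x x') < eps) /\
  (forall y, oball Y q (rho - eps) y ->
     exists x, oball X p rho x /\ mdist (f x) y < eps).

Section PointedApproximation.
Variables (X Y : MetricSpace) (p : X) (q : Y) (rho eps : R) (f : X -> Y).
Hypothesis Hf : pGH_approx X Y p q rho eps f.
Hypothesis Heps : 0 < eps.

Lemma pGH_approx_dist (x x' : X) : oball X p rho x -> oball X p rho x' ->
  mdist (f x) (f x') < mdist x x' + eps /\ mdist x x' < mdist (f x) (f x') + eps.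
Proof.
  intros Hx Hx'. destruct Hf as [_ [Hdist _]].
  pose proof (Rabs_def2 _ _ (Hdist x x' Hx Hx')). lra.
Qed.

Lemma pGH_approx_dist_base (x : X) : oball X p rho x ->
  mdist q (f x) < mdist p x + eps /\ mdist p x < mdist q (f x) + eps.
Proof.
  intros Hx. assert (Hp : oball X p rho p).
  { unfold oball in *. rewrite mdist_refl. pose proof (mdist_nonneg X p x). lra. }
  destruct Hf as [Hfp _]. rewrite <- Hfp. exact (pGH_approx_dist p x Hp Hx).
Qed.

Lemma pGH_approx_pullback_open_cover (Rad r : R) (lY : list Y) :
  0 < r -> Rad + r <= rho ->
  covered_open Y (cball Y q (Rad + 2 * eps)) (r - 2 * eps) lY ->
  exists l, length l = length lY /\ covered_open X (cball X p Rad) r l.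
Proof.
  intros Hr Hrho HlY. destruct Hf as [_ [_ Hsurj]].
  destruct (list_choice
    (fun c x => mdist q c < rho - eps -> oball X p rho x /\ mdist (f x) c < eps) lY)
    as [l [Hlen Hl]].
  { intros c _. destruct (classic (mdist q c < rho - eps)) as [Hc|Hc].
    - destruct (Hsurj c Hc) as [x Hx]. exists x. auto.
    - exists p. intros H. contradiction. }
  exists l. split; [exact Hlen|].
  intros x Hx. unfold cball in Hx.
  assert (Hxo : oball X p rho x) by (unfold oball; lra).
  destruct (pGH_approx_dist_base x Hxo) as [Hqfx _].
  destruct (HlY (f x)) as [c [Hc Hcfx]]; [unfold cball; lra|].
  destruct (Hl c Hc) as [x' [Hx' [Hx'o Hx'c]]].
  { pose proof (mdist_tri Y q (f x) c). rewrite (mdist_sym Y (f x) c) in H. lra. }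
  exists x'. split; [exact Hx'|].
  destruct (pGH_approx_dist x' x Hx'o Hxo) as [_ H].
  pose proof (mdist_tri Y (f x') c (f x)). lra.
Qed.

Lemma pGH_approx_pushforward_closed_cover (Rad r : R) (l : list X) :
  0 < r -> Rad + r + eps <= rho ->
  (forall c, In c l -> cball X p (Rad + r) c) ->
  covered_closed X (closure X (oball X p Rad)) r l ->
  (forall y, In y (map f l) -> cball Y q (Rad + r + eps) y) /\
  covered_closed Y (fun y => mdist q y + 2 * eps < Rad) (r + 2 * eps) (map f l).
Proof.
  intros Hr Hrho Hnear Hl. destruct Hf as [_ [_ Hsurj]].
  assert (Hin : forall c, In c l -> oball X p rho c).
  { intros c Hc. specialize (Hnear c Hc). unfold cball, oball in *. lra. }
  split.
  - intros y Hy. apply in_map_iff in Hy as [c [<- Hc]].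
    destruct (pGH_approx_dist_base c (Hin c Hc)) as [H _].
    specialize (Hnear c Hc). unfold cball in *. lra.
  - intros y Hy.
    destruct (Hsurj y) as [x [Hxo Hxy]]; [unfold oball; lra|].
    destruct (pGH_approx_dist_base x Hxo) as [_ Hpx].
    assert (Hxb : closure X (oball X p Rad) x).
    { apply closure_incl. unfold oball. pose proof (mdist_tri Y q y (f x)).
      rewrite (mdist_sym Y y (f x)) in H. lra. }
    destruct (Hl x Hxb) as [c [Hc Hcx]].
    exists (f c). split; [apply in_map, Hc|].
    destruct (pGH_approx_dist c x (Hin c Hc) Hxo) as [H _].
    pose proof (mdist_tri Y (f c) (f x) y). lra.
Qed.

End PointedApproximation.

Lemma n_open_usc_GH (r : R) (X : nat -> MetricSpace) (Y : MetricSpace) :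
  0 < r -> compact_ms Y -> GH_conv X Y ->
  exists k0, forall k, (k0 <= k)%nat -> (n_open (X k) full r <= n_open Y full r)%nat.
Proof.
  intros Hr HY HGH.
  destruct (n_open_attained Y full r) as [lY [HlY Hlen]].
  { exact (covered_open_of_compact Y full full r Hr HY (fun _ H => H)). }
  destruct (compact_cover_margin Y full (fun _ => 0) 0 r lY HY) as [delta [Hdelta Hmargin]].
  { intros s. apply is_open_const. }
  { intros y _. apply HlY. exact I. }
  destruct (HGH (delta / 2)) as [k0 Hk0]; [lra|].
  exists k0. intros k Hk. destruct (Hk0 k Hk) as [C HC].
  destruct (covered_closed_correspondence _ _ _ _ (r - delta) lY
              (eps_correspondence_flip _ _ _ _ HC)) as [l [Hl Hcov]].
  { apply covered_closed_of_open. intros y _. apply Hmargin. split; [exact I | lra]. }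
  rewrite <- Hlen, <- Hl. apply n_open_le_length.
  apply (covered_open_of_closed _ _ (r - delta + delta / 2)); [lra | exact Hcov].
Qed.

Lemma n_open_cball_usc_pGH (r Rad : R) (X : nat -> MetricSpace) (p : forall k, X k)
    (Y : MetricSpace) (q : Y) :
  0 < r -> 0 < Rad -> proper_ms Y -> pGH_conv X p Y q ->
  exists k0, forall k, (k0 <= k)%nat ->
    (n_open (X k) (cball (X k) (p k) Rad) r <= n_open Y (cball Y q Rad) r)%nat.
Proof.
  intros Hr HRad HY Hp.
  destruct (n_open_attained Y (cball Y q Rad) r) as [lY [HlY Hlen]].
  { exact (covered_open_of_compact Y _ _ r Hr (HY q Rad) (fun _ H => H)). }
  destruct (compact_cover_margin Y (cball Y q (Rad + 1)) (mdist q) Rad r lY (HY q _))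
    as [delta [Hdelta Hmargin]].
  { apply is_open_dist_gt. }
  { intros y [_ Hy]. apply HlY, Hy. }
  set (eps := Rmin delta 1 / 2).
  assert (Heps : 0 < eps /\ 2 * eps <= delta /\ 2 * eps <= 1).
  { pose proof (Rmin_l delta 1). pose proof (Rmin_r delta 1).
    pose proof (Rmin_pos delta 1 Hdelta Rlt_0_1). unfold eps. lra. }
  destruct (Hp (Rad + r + 1) eps) as [k0 Hk0]; [lra | lra |].
  exists k0. intros k Hk. destruct (Hk0 k Hk) as [f Hf].
  destruct (pGH_approx_pullback_open_cover _ _ _ _ _ _ f Hf (proj1 Heps) Rad r lY)
    as [l [Hl Hcov]]; [lra | lra | |].
  { intros y Hy. unfold cball in Hy.
    destruct (Hmargin y) as [c [Hc Hd]]; [unfold cball; lra|].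
    exists c. split; [exact Hc | lra]. }
  rewrite <- Hlen, <- Hl. exact (n_open_le_length _ _ _ _ Hcov).
Qed.

Lemma n_closed_lsc_GH (r : R) (X : nat -> MetricSpace) (Y : MetricSpace) :
  0 < r -> (forall k, compact_ms (X k)) -> compact_ms Y -> GH_conv X Y ->
  exists k0, forall k, (k0 <= k)%nat -> (n_closed Y full r <= n_closed (X k) full r)%nat.
Proof.
  intros Hr HX HY HGH. set (NY := n_closed Y full r).
  apply NNPP. intros Hno.
  pose proof (not_eventually (fun k => (NY <= n_closed (X k) full r)%nat) Hno) as Hbad.
  assert (Hcovers : forall m : nat, exists cs, (length cs <= NY - 1)%nat /\
            covered_closed Y full (r + / (INR m + 1)) cs).
  { intros m. destruct (HGH _ (inv_succ_pos m)) as [k0 Hk0].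
    destruct (Hbad k0) as [k [Hk Hlt]]. destruct (Hk0 k Hk) as [C HC].
    destruct (n_closed_attained (X k) full r) as [l [Hl Hlen]].
    { exact (covered_closed_of_compact _ full full r Hr (HX k) (fun _ H => H)). }
    destruct (covered_closed_correspondence _ _ C _ r l HC Hl) as [cs [Hcs Hcov]].
    exists cs. split; [lia | exact Hcov]. }
  destruct (choice _ Hcovers) as [cs Hcs].
  destruct (covered_closed_of_approx Y full full r cs (NY - 1) HY) as [l [Hlen Hl]].
  - intros; exact I.
  - apply Hcs.
  - apply approx_covered_closed_of_shrinking, Hcs.
  - pose proof (n_closed_le_length Y full r l Hl).
    destruct (Hbad O) as [k [_ Hk]]. lia.
Qed.

Lemma n_closed_closure_oball_lsc_pGH (r Rad : R) (X : nat -> MetricSpace)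
    (p : forall k, X k) (Y : MetricSpace) (q : Y) :
  0 < r -> 0 < Rad -> (forall k, proper_ms (X k)) -> proper_ms Y -> pGH_conv X p Y q ->
  exists k0, forall k, (k0 <= k)%nat ->
    (n_closed Y (closure Y (oball Y q Rad)) r <=
     n_closed (X k) (closure (X k) (oball (X k) (p k) Rad)) r)%nat.
Proof.
  intros Hr HRad HX HY Hp. set (NY := n_closed Y (closure Y (oball Y q Rad)) r).
  apply NNPP. intros Hno.
  pose proof (not_eventually
    (fun k => (NY <= n_closed (X k) (closure (X k) (oball (X k) (p k) Rad)) r)%nat) Hno)
    as Hbad.
  assert (Hcovers : forall m : nat, exists cs, (length cs <= NY - 1)%nat /\
            (forall c, In c cs -> cball Y q (Rad + r + 1) c) /\
            covered_closed Y (fun y => mdist q y + 2 * / (INR m + 1) < Rad)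
                             (r + 2 * / (INR m + 1)) cs).
  { intros m. pose proof (inv_succ_pos m) as Heps. pose proof (inv_succ_le_1 m).
    destruct (Hp (Rad + r + 1) (/ (INR m + 1))) as [k0 Hk0]; [lra | exact Heps |].
    destruct (Hbad k0) as [k [Hk Hlt]]. destruct (Hk0 k Hk) as [f Hf].
    destruct (n_closed_attained (X k) (closure (X k) (oball (X k) (p k) Rad)) r)
      as [l0 [Hl0 Hlen]].
    { exact (covered_closed_of_compact _ _ _ r Hr (HX k (p k) Rad)
               (closure_oball_cball _ _ _)). }
    destruct (covered_closed_near_centres _ _ (p k) Rad r l0
                (closure_oball_cball _ _ _) Hl0) as [l [Hll0 [Hl Hnear]]].
    destruct (pGH_approx_pushforward_closed_cover _ _ _ _ _ _ f Hf Heps Rad r l)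
      as [Hball Hcov]; [exact Hr | lra | exact Hnear | exact Hl |].
    exists (map f l). rewrite length_map. split; [lia | split; [|exact Hcov]].
    intros c Hc. specialize (Hball c Hc). unfold cball in *. lra. }
  destruct (choice _ Hcovers) as [cs Hcs].
  destruct (covered_closed_of_approx Y (cball Y q (Rad + r + 1))
              (closure Y (oball Y q Rad)) r cs (NY - 1) (HY q _)) as [l [Hlen Hl]].
  - apply Hcs.
  - apply Hcs.
  - apply approx_covered_closure_oball, Hcs.
  - pose proof (n_closed_le_length Y _ r l Hl).
    destruct (Hbad O) as [k [_ Hk]]. lia.
Qed.

Theorem proposition3p3 :
  (* (i) X |-> n_r(X) is upper semicontinuous (GH topology, compact spaces) *)
  (forall r : R, 0 < r ->
   forall (X : nat -> MetricSpace) (Y : MetricSpace),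
     (forall k, compact_ms (X k)) -> compact_ms Y -> GH_conv X Y ->
     exists k0, forall k, (k0 <= k)%nat ->
       (n_open (X k) full r <= n_open Y full r)%nat) /\
  (* (ii) (X,x) |-> n_r(cl.ball(x,R)) is u.s.c. (pGH topology, proper spaces) *)
  (forall r Rad : R, 0 < r -> 0 < Rad ->
   forall (X : nat -> MetricSpace) (p : forall k, X k) (Y : MetricSpace) (q : Y),
     (forall k, proper_ms (X k)) -> proper_ms Y -> pGH_conv X p Y q ->
     exists k0, forall k, (k0 <= k)%nat ->
       (n_open (X k) (cball (X k) (p k) Rad) r <= n_open Y (cball Y q Rad) r)%nat) /\
  (* (iii) X |-> \overline{n}_r(X) is lower semicontinuous *)
  (forall r : R, 0 < r ->
   forall (X : nat -> MetricSpace) (Y : MetricSpace),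
     (forall k, compact_ms (X k)) -> compact_ms Y -> GH_conv X Y ->
     exists k0, forall k, (k0 <= k)%nat ->
       (n_closed Y full r <= n_closed (X k) full r)%nat) /\
  (* (iv) (X,x) |-> \overline{n}_r(closure of B(x,R)) is l.s.c. *)
  (forall r Rad : R, 0 < r -> 0 < Rad ->
   forall (X : nat -> MetricSpace) (p : forall k, X k) (Y : MetricSpace) (q : Y),
     (forall k, proper_ms (X k)) -> proper_ms Y -> pGH_conv X p Y q ->
     exists k0, forall k, (k0 <= k)%nat ->
       (n_closed Y (closure Y (oball Y q Rad)) r <=
        n_closed (X k) (closure (X k) (oball (X k) (p k) Rad)) r)%nat).
Proof.
  split; [|split; [|split]].
  - intros r Hr X Y _ HY. exact (n_open_usc_GH r X Y Hr HY).
  - intros r Rad Hr HRad X p Y q _ HY.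
    exact (n_open_cball_usc_pGH r Rad X p Y q Hr HRad HY).
  - intros r Hr X Y. exact (n_closed_lsc_GH r X Y Hr).
  - intros r Rad Hr HRad X p Y q.
    exact (n_closed_closure_oball_lsc_pGH r Rad X p Y q Hr HRad).
Qed.
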